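(* Suppose $\mathrm{char}\,\mathbb{F}=2$ and let $C$ be an $A$-code of length $2$ with canonical generator matrix $\begin{pmatrix}g_1&g_2\\0&g_3\end{pmatrix}$, where $g_1,g_3$ are nonzero monic divisors of $f$, $g_3\mid (f/g_1)g_2$ in $\mathbb{F}[x]$ and $\deg g_2<\deg g_3$. Then $C$ is self-dual ($C=C^\perp$) if and only if either (i) $g_1=g_3$, $g_2=0$ and $f=g_1^2$; or (ii) $f=g_1^2f'$, $g_3=g_1f'$ and $g_2=g_1\bigl(h\sqrt[2]{f'}+1\bigr)$ for some $f',h\in\mathbb{F}[x]$ with $\deg h<\deg f'-\deg\sqrt[2]{f'}$.
   Context: Let $\mathbb{F}$ be a finite field, $f(x)\in\mathbb{F}[x]$ monic of degree $m$, $A=\mathbb{F}[x]/\langle f(x)\rangle$, elements identified with polynomials of degree $<m$. An $A$-code of length $l$ is an $A$-submodule of $A^l$; $C^\perp=\{a\in A^l:\sum_ia_ic_i=0\ \forall c\in C\}$. The canonical generator matrix (CGM) of a nonzero $A$-code $C$ is the unique matrix over $A$ whose rows generate $C$, are monic with strictly increasing leading indices (position of first nonzero entry), have leading entries dividing $f$, satisfy that $(f/L_i)\cdot(\text{row }i)$ is an $A$-combination of later rows ($L_i$ the leading entry of row $i$), and such that every entry above a leading entry has smaller degree than it. For $h\in\mathbb{F}[x]$ with prime factorization $h=p_1^{a_1}\cdots p_t^{a_t}$ (monic irreducible $p_i$), $\sqrt[2]{h}=p_1^{\lceil a_1/2\rceil}\cdots p_t^{\lceil a_t/2\rceil}$.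 *)

From HB Require Import structures.
From mathcomp Require Import all_boot all_order all_algebra.
From Stdlib Require Import ClassicalEpsilon.
Set Implicit Arguments. Unset Strict Implicit. Unset Printing Implicit Defensive.
Import GRing.Theory.
Local Open Scope ring_scope.

Section Defs.
Variable F : fieldType.

(* Elements of A = F[x]/<f> are identified with polynomials of size < size f,
   i.e. of degree < m = deg f. *)
Definition inA (f u : {poly F}) : Prop := (size u < size f)%N.

Definition code2 := {poly F} * {poly F} -> Prop.

Definition code_of_rows (f g1 g2 g3 : {poly F}) : code2 :=
  fun c => exists a b : {poly F},
      c = ((a * g1) %% f, (a * g2 + b * g3) %% f).

Definition dual_code (f : {poly F}) (C : code2) : code2 :=
  fun c => [/\ inA f c.1, inA f c.2 &
             forall d, C d -> (c.1 * d.1 + c.2 * d.2) %% f = 0].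

Definition self_dual (f : {poly F}) (C : code2) : Prop :=
  forall c, C c <-> dual_code f C c.

(* Multiplicity of p in h (meaningful for h != 0 and p nonconstant). *)
Definition pmult (p h : {poly F}) : nat :=
  (
  \max_(k < size h | (p ^+ k %| h)%R) k)%N.

Definition sqrt2 (h : {poly F}) : {poly F} :=
  epsilon (inhabits 0) (fun r : {poly F} => r \is monic /\
    forall p : {poly F}, p \is monic -> irreducible_poly p ->
      pmult p r = uphalf (pmult p h)).

End Defs.

From HB Require Import structures.
From mathcomp Require Import all_boot all_order all_algebra.
From Stdlib Require Import Classical ClassicalEpsilon.
From mathcomp Require Import zify ring.
Set Implicit Arguments. Unset Strict Implicit. Unset Printing Implicit Defensive.
Import GRing.Theory.
Local Open Scope ring_scope.

(** Everything is decided by orthogonality to the two generator rows.  If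
    [f = g1^2 f'], [g3 = g1 f'] and [g2 = g1 w], the rows are pairwise
    orthogonal iff [f' | 1 + w^2 = (1 + w)^2] (characteristic 2), and then
    every vector orthogonal to both rows lies in the code.  Conversely, in a
    self-dual code the rows are orthogonal, so [f/g3] divides [g3] and [g2],
    and the dual vectors [(f/g1, 0)], [(z, f/g3)] with [z g3 = (f/g1) g2], and
    [(0, f' f/g3)] lie in the code; this forces successively [f = g1^2 f'],
    [g3 = f' f/g3] and [f/g3 = g1].  Finally, as [deg w < deg f'] and
    [f' | k^2] iff [sqrt2(f') | k], the condition [f' | (1 + w)^2] means
    [f' = 1, w = 0] or [1 + w = h sqrt2(f')]. *)

Section Multiplicity.
Variable F : fieldType.
Implicit Types p q x y h : {poly F}.

Lemma dvdp_exp_size p x k : x != 0 -> (1 < size p)%N -> p ^+ k %| x -> (k < size x)%N.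
Proof.
move=> x0 sp /(dvdp_leq x0) le; have := size_exp p k.
have : (k <= (size p).-1 * k)%N by rewrite leq_pmull // -subn1 subn_gt0.
have : (0 < size x)%N by rewrite size_poly_gt0.
move: (size (p ^+ k)) (size x) ((size p).-1 * k)%N le => u v w; lia.
Qed.

Lemma dvdp_pmult p x : p ^+ pmult p x %| x.
Proof.
rewrite /pmult; elim/big_ind: _ => [|m n|//]; first by rewrite dvd1p.
by rewrite /maxn; case: ltnP.
Qed.

Lemma pfactor_dvdp p x k : x != 0 -> (1 < size p)%N ->
  (p ^+ k %| x) = (k <= pmult p x)%N.
Proof.
move=> x0 sp; apply/idP/idP => [pk_x | le_k].
  exact: leq_bigmax_cond (Ordinal (dvdp_exp_size x0 sp pk_x)) pk_x.
exact: dvdp_trans (dvdp_exp2l p le_k) (dvdp_pmult p x).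
Qed.

Lemma pmult_small p x : (size x <= 1)%N -> pmult p x = 0%N.
Proof. by move=> sx; apply/eqP; rewrite -leqn0; apply/bigmax_leqP => i _; have := ltn_ord i; lia. Qed.

Lemma Euclid_dvdpM p x y : irreducible_poly p -> (p %| x * y) = (p %| x) || (p %| y).
Proof.
move=> ip; apply/idP/orP => [pxy | [px | py]]; last 2 first.
- exact: dvdp_mulr.
- exact: dvdp_mull.
have [px | npx] := boolP (p %| x); [left | right] => //.
by rewrite -(Gauss_dvdpr _ (_ : coprimep p x)) // irreducible_poly_coprime.
Qed.

Lemma pmult_split p x : irreducible_poly p -> x != 0 ->
  exists2 x', x = x' * p ^+ pmult p x & ~~ (p %| x').
Proof.
move=> ip x0; have /dvdpP [x' ex] := dvdp_pmult p x.
exists x' => //; apply/negP => /dvdpP [x'' ex'].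
have : p ^+ (pmult p x).+1 %| x.
  by apply/dvdpP; exists x''; rewrite {1}ex ex' exprS mulrA.
by rewrite pfactor_dvdp ?ip.1 // ltnn.
Qed.

Lemma pmultM p x y : irreducible_poly p -> x != 0 -> y != 0 ->
  pmult p (x * y) = (pmult p x + pmult p y)%N.
Proof.
move=> ip x0 y0; have sp := ip.1; have xy0 : x * y != 0 by rewrite mulf_neq0.
have [x' ex px'] := pmult_split ip x0; have [y' ey py'] := pmult_split ip y0.
apply/eqP; rewrite eqn_leq -pfactor_dvdp // exprD dvdp_mul ?dvdp_pmult //=.
rewrite leqNgt -pfactor_dvdp //.
have -> : x * y = x' * y' * p ^+ (pmult p x + pmult p y) by rewrite {1}ex {1}ey exprD; ring.
rewrite exprS dvdp_mul2r; last by rewrite expf_neq0 // irredp_neq0.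
by rewrite Euclid_dvdpM // negb_or px' py'.
Qed.

Lemma ltn_size_mulr p x : x != 0 -> (1 < size p)%N -> (size x < size (x * p)%R)%N.
Proof.
move=> x0 sp; have p0 : p != 0 by rewrite -size_poly_gt0 ltnW.
have sx : (0 < size x)%N by rewrite size_poly_gt0.
by rewrite size_mul //; move: (size x) (size p) sx sp => a b; lia.
Qed.

Lemma dvdp_leq_pmult p x y : (1 < size p)%N -> y != 0 -> x %| y ->
  (pmult p x <= pmult p y)%N.
Proof. by move=> sp y0 xy; rewrite -pfactor_dvdp // (dvdp_trans (dvdp_pmult p x)). Qed.

Lemma irredp_eqp p q : p %= q -> irreducible_poly p -> irreducible_poly q.
Proof.
move=> pq [sp ip]; split => [|d sd dq]; first by rewrite -(eqp_size pq).
have dp : d %| p by rewrite (eqp_dvdr _ pq).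
exact: eqp_trans (ip d sd dp) pq.
Qed.

Lemma monic_irredp_dvdp x : (1 < size x)%N ->
  exists p, [/\ p \is monic, irreducible_poly p & p %| x].
Proof.
move: {2}(size x) (leqnn (size x)) => n; elim: n x => [|n IH] x sx x1.
  by move: sx; rewrite leqNgt ltnW.
have x0 : x != 0 by rewrite -size_poly_gt0 ltnW.
have [ix | rx] := classic (irreducible_poly x).
  have lx0 : lead_coef x != 0 by rewrite lead_coef_eq0.
  exists ((lead_coef x)^-1 *: x); split.
  - by rewrite monicE lead_coefZ mulVf.
  - by apply: irredp_eqp ix; rewrite eqp_sym eqp_scale ?invr_eq0.
  - by rewrite dvdpZl ?invr_eq0.
have [q [sq qx nqx]] : exists q, [/\ size q != 1%N, q %| x & ~~ (q %= x)].
  apply: NNPP => nq; apply: rx; split => // q sq qx.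
  by apply: NNPP => nqx; apply: nq; exists q; split => //; apply/negP.
have q0 : q != 0 by apply: contraNneq x0 => q0; rewrite -dvd0p -q0.
have sqn : (size q <= n)%N.
  have := dvdp_leq x0 qx; rewrite leq_eqVlt (dvdp_size_eqp qx) (negbTE nqx) /=.
  by move=> lt; apply: leq_trans lt sx.
have sq1 : (1 < size q)%N by rewrite ltn_neqAle eq_sym sq size_poly_gt0.
have [p [mp ip pq]] := IH q sqn sq1.
by exists p; split => //; apply: dvdp_trans pq qx.
Qed.

Lemma pmult_irredp p q : p \is monic -> q \is monic ->
  irreducible_poly p -> irreducible_poly q -> pmult q p = (q == p).
Proof.
move=> mp mq ip iq; have p0 := irredp_neq0 ip.
have [->|qp] := eqVneq q p; rewrite ?eqxx /=.
  have : p ^+ 1 %| p by rewrite expr1.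
  have : (p ^+ 2 %| p) = false by rewrite -{2}(expr1 p) dvdp_Pexp2l ?ip.1.
  by rewrite !pfactor_dvdp ?ip.1 //; lia.
apply/eqP; rewrite -leqn0 leqNgt -pfactor_dvdp ?iq.1 // expr1.
have sq : size q != 1%N by rewrite neq_ltn iq.1 orbT.
by apply: contra qp => qp; rewrite -eqp_monic //; exact: ip.2 q sq qp.
Qed.

Lemma pmult_leq_dvdp x y : x != 0 -> y != 0 ->
  (forall p, p \is monic -> irreducible_poly p -> (pmult p x <= pmult p y)%N) ->
  x %| y.
Proof.
move: {2}(size x) (leqnn (size x)) => n; elim: n x y => [|n IH] x y sx x0 y0 le_xy.
  by move: x0; rewrite -size_poly_gt0 ltnNge sx.
have [x1 | /monic_irredp_dvdp [p [mp ip px]]] := leqP (size x) 1.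
  have x_dvd1 : x %| 1 by rewrite dvdp1 eqn_leq x1 size_poly_gt0.
  exact: dvdp_trans x_dvd1 (dvd1p y).
have p0 := irredp_neq0 ip.
have py : p %| y.
  rewrite -[p]expr1 pfactor_dvdp ?ip.1 //; apply: leq_trans (le_xy p mp ip).
  by rewrite -pfactor_dvdp ?expr1 ?ip.1.
move: px py => /dvdpP [x' ex] /dvdpP [y' ey].
have x'0 : x' != 0 by apply: contraNneq x0 => x'0; rewrite ex x'0 mul0r.
have y'0 : y' != 0 by apply: contraNneq y0 => y'0; rewrite ey y'0 mul0r.
rewrite ex ey dvdp_mul2r //; apply: IH => // [|q mq iq].
  by rewrite -ltnS (leq_trans _ sx) // ex ltn_size_mulr // ip.1.
by have := le_xy q mq iq; rewrite ex ey !pmultM //; lia.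
Qed.

End Multiplicity.

Section SquareRoot.
Variable F : fieldType.
Implicit Types h k r : {poly F}.

Definition is_sqrt2 h r := r \is monic /\ forall p : {poly F},
  p \is monic -> irreducible_poly p -> pmult p r = uphalf (pmult p h).

Lemma exists_sqrt2 h : h != 0 -> exists r, is_sqrt2 h r.
Proof.
move: {2}(size h) (leqnn (size h)) => n; elim: n h => [|n IH] h sh h0.
  by move: h0; rewrite -size_poly_gt0 ltnNge sh.
have [h1 | /monic_irredp_dvdp [p [mp ip /dvdpP [h' eh]]]] := leqP (size h) 1.
  by exists 1; split => [|p _ _]; rewrite ?monic1 // !pmult_small ?size_poly1.
have p0 := irredp_neq0 ip.
have h'0 : h' != 0 by apply: contraNneq h0 => h'0; rewrite eh h'0 mul0r.
have sh' : (size h' <= n)%N.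
  by rewrite -ltnS (leq_trans _ sh) // eh ltn_size_mulr // ip.1.
have [r [mr hr]] := IH h' sh' h'0.
exists (if odd (pmult p h') then r else r * p); split; first by case: ifP; rewrite ?monicMr.
move=> q mq iq.
have -> : pmult q h = (pmult q h' + (q == p))%N.
  by rewrite eh pmultM // (pmult_irredp mp mq ip iq).
case: ifP => odd_h';
  rewrite ?(pmultM iq (monic_neq0 mr) p0) ?(pmult_irredp mp mq ip iq) hr //;
  by case: eqVneq => [->|] /=; lia.
Qed.

Lemma sqrt2P h : h != 0 -> is_sqrt2 h (sqrt2 h).
Proof. by move=> h0; apply: (epsilon_spec (inhabits 0) (is_sqrt2 h)); apply: exists_sqrt2. Qed.

Lemma dvdp_sqr_sqrt2 h : h != 0 -> h %| sqrt2 h ^+ 2.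
Proof.
move=> h0; have [ms hs] := sqrt2P h0; have s0 := monic_neq0 ms.
apply: pmult_leq_dvdp => // [|p mp ip]; first by rewrite expf_neq0.
by rewrite expr2 pmultM // hs //; lia.
Qed.

Lemma sqrt2_dvdp h k : h != 0 -> h %| k ^+ 2 -> sqrt2 h %| k.
Proof.
move=> h0 hk; have [ms hs] := sqrt2P h0; have [->|k0] := eqVneq k 0; first exact: dvdp0.
apply: pmult_leq_dvdp => // [|p mp ip]; first exact: monic_neq0.
have := dvdp_leq_pmult ip.1 (expf_neq0 2 k0) hk.
by rewrite hs // expr2 pmultM //; lia.
Qed.

End SquareRoot.

Section ModularDot.
Variables (F : fieldType) (f : {poly F}).
Implicit Types x y z w : {poly F}.

Lemma dvdp_mulmod x y : (f %| x * (y %% f)) = (f %| x * y).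
Proof. by rewrite /dvdp modp_mul. Qed.

Lemma dvdp_mulmod2 x y z w : (f %| x * (y %% f) + z * (w %% f)) = (f %| x * y + z * w).
Proof. by rewrite /dvdp modpD !modp_mul -modpD. Qed.

End ModularDot.

Section CodeOfRows.
Variables (F : fieldType) (f g1 g2 g3 : {poly F}).
Local Notation C := (code_of_rows f g1 g2 g3).

Lemma code_of_rows_row1 : C (g1 %% f, g2 %% f).
Proof. by exists 1, 0; rewrite !mul1r mul0r addr0. Qed.

Lemma code_of_rows_row2 : C (0, g3 %% f).
Proof. by exists 0, 1; rewrite !mul0r mod0p add0r mul1r. Qed.

Lemma dual_code_of_rowsP c : dual_code f C c <->
  [/\ inA f c.1, inA f c.2, f %| g1 * c.1 + g2 * c.2 & f %| g3 * c.2].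
Proof.
split=> [[c1f c2f orth_c] | [c1f c2f orth1 orth2]].
  have /modp_eq0P := orth_c _ code_of_rows_row1.
  have /modp_eq0P := orth_c _ code_of_rows_row2.
  rewrite /= mulr0 add0r dvdp_mulmod dvdp_mulmod2.
  by move=> orth2 orth1; split; rewrite // mulrC // [g2 * _]mulrC.
split => // d [a [b ->]] /=; apply/modp_eq0P; rewrite dvdp_mulmod2.
have -> : c.1 * (a * g1) + c.2 * (a * g2 + b * g3) =
          a * (g1 * c.1 + g2 * c.2) + b * (g3 * c.2) by ring.
by rewrite dvdp_add // dvdp_mull.
Qed.

Lemma self_dual_orth : self_dual f C ->
  [/\ f %| g1 ^+ 2 + g2 ^+ 2, f %| g2 * g3 & f %| g3 ^+ 2].
Proof.
move=> sdC.
have /sdC/dual_code_of_rowsP [_ _ orth11 orth12] := code_of_rows_row1.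
have /sdC/dual_code_of_rowsP [_ _ _ orth22] := code_of_rows_row2.
move: orth11 orth12 orth22; rewrite /= dvdp_mulmod2 !dvdp_mulmod.
by rewrite !expr2 [g3 * g2]mulrC.
Qed.

Lemma self_dual_dual_mem x y : f != 0 -> self_dual f C ->
  f %| g1 * x + g2 * y -> f %| g3 * y ->
  exists a b, x %% f = (a * g1) %% f /\ y %% f = (a * g2 + b * g3) %% f.
Proof.
move=> f0 sdC xy y3.
have /sdC [a [b [-> ->]]] : dual_code f C (x %% f, y %% f).
  by apply/dual_code_of_rowsP; rewrite /inA /= !ltn_modp dvdp_mulmod2 dvdp_mulmod.
by exists a, b.
Qed.

Lemma code_of_rows_sub_dual : f != 0 ->
  f %| g1 ^+ 2 + g2 ^+ 2 -> f %| g2 * g3 -> f %| g3 ^+ 2 ->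
  forall c, C c -> dual_code f C c.
Proof.
move=> f0 orth11 orth12 orth22 _ [a [b ->]]; apply/dual_code_of_rowsP.
rewrite /inA /= !ltn_modp dvdp_mulmod2 dvdp_mulmod f0; split => //.
  have -> : g1 * (a * g1) + g2 * (a * g2 + b * g3) = a * (g1 ^+ 2 + g2 ^+ 2) + b * (g2 * g3) by ring.
  by rewrite dvdp_add // dvdp_mull.
have -> : g3 * (a * g2 + b * g3) = a * (g2 * g3) + b * g3 ^+ 2 by ring.
by rewrite dvdp_add // dvdp_mull.
Qed.

End CodeOfRows.

Lemma pchar2_poly (F : fieldType) : 2%N \in [pchar F] -> 2%N \in [pchar {poly F}].
Proof. by rewrite pchar_poly. Qed.

Lemma sqrrD1_pchar2 (F : fieldType) (w : {poly F}) :
  2%N \in [pchar F] -> (1 + w) ^+ 2 = 1 + w ^+ 2.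
Proof. by move=> /pchar2_poly char2; rewrite sqrrD (mulrn_pchar char2) expr1n addr0. Qed.

Section CodeOfRowsForm.
Variables (F : fieldType) (f g1 g2 g3 f' w : {poly F}).
Hypotheses (pchar2 : 2%N \in [pchar F]) (f0 : f != 0).
Hypotheses (ef : f = g1 ^+ 2 * f') (e3 : g3 = g1 * f') (e2 : g2 = g1 * w).
Hypothesis f'_w : f' %| (1 + w) ^+ 2.
Local Notation C := (code_of_rows f g1 g2 g3).

Let char2 := pchar2_poly pchar2.
Let g10 : g1 != 0. Proof. by apply: contraNneq f0 => g10; rewrite ef g10 expr0n mul0r. Qed.
Let f'0 : f' != 0. Proof. by apply: contraNneq f0 => f'0; rewrite ef f'0 mulr0. Qed.

Let dual_sub_code c : dual_code f C c -> C c.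
Proof.
case: c => c1 c2 /dual_code_of_rowsP [/= c1f c2f orth1 orth2].
have ef1 : f = g1 * (g1 * f') by rewrite ef; ring.
have /dvdpP [t ec2] : g1 %| c2.
  by move: orth2; rewrite ef1 e3 mulrC dvdp_mul2l // mulf_neq0.
have orth1' : g1 * f' %| c1 + g1 * (t * w).
  rewrite -(dvdp_mul2l _ _ g10) -ef1.
  by rewrite (_ : g1 * (c1 + g1 * (t * w)) = g1 * c1 + g2 * c2) // e2 ec2; ring.
have /dvdpP [s ec1] : g1 %| c1.
  by rewrite -(dvdp_addl _ (dvdp_mulIl g1 (t * w))) (dvdp_trans (dvdp_mulIl g1 f')).
have f'_stw : f' %| s + t * w.
  by move: orth1'; rewrite ec1 (_ : s * g1 + _ = g1 * (s + t * w)) ?dvdp_mul2l //; ring.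
have /dvdpP [b eb] : f' %| t + s * w.
  have -> : t + s * w = w * (s + t * w) + t * (1 + w) ^+ 2 - (t * w ^+ 2) *+ 2.
    by rewrite sqrrD1_pchar2 //; ring.
  by rewrite (mulrn_pchar char2) subr0 dvdp_add // dvdp_mull.
exists s, b; congr pair; first by rewrite -ec1 modp_small.
have -> : s * g2 + b * g3 = c2 + (s * w * g1) *+ 2.
  have -> : b * g3 = g1 * (t + s * w) by rewrite e3 eb; ring.
  by rewrite e2 ec2; ring.
by rewrite (mulrn_pchar char2) addr0 modp_small.
Qed.

Lemma code_of_rows_self_dual : self_dual f C.
Proof.
move=> c; split=> [|/dual_sub_code //]; apply: code_of_rows_sub_dual => //.
- have -> : g1 ^+ 2 + g2 ^+ 2 = g1 ^+ 2 * (1 + w) ^+ 2.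
    by rewrite e2 sqrrD1_pchar2 //; ring.
  by rewrite ef dvdp_mul2l ?expf_neq0.
- have -> : g2 * g3 = g1 ^+ 2 * (f' * w) by rewrite e2 e3; ring.
  by rewrite ef dvdp_mul2l ?expf_neq0 ?dvdp_mulIl.
- have -> : g3 ^+ 2 = g1 ^+ 2 * (f' * f') by rewrite e3; ring.
  by rewrite ef dvdp_mul2l ?expf_neq0 ?dvdp_mulIl.
Qed.

End CodeOfRowsForm.

Section SelfDualForm.
Variables (F : fieldType) (f g1 g2 g3 : {poly F}).
Hypotheses (pchar2 : 2%N \in [pchar F]) (monic_f : f \is monic).
Hypotheses (monic_g1 : g1 \is monic) (g1_f : g1 %| f).
Hypotheses (monic_g3 : g3 \is monic) (g3_f : g3 %| f) (g3_g2 : g3 %| (f %/ g1) * g2).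
Hypothesis sdC : self_dual f (code_of_rows f g1 g2 g3).

Let f0 : f != 0 := monic_neq0 monic_f.
Let g10 : g1 != 0 := monic_neq0 monic_g1.
Let g30 : g3 != 0 := monic_neq0 monic_g3.
Let char2 := pchar2_poly pchar2.

Let u1 := f %/ g1.
Let u3 := f %/ g3.
Let f_u1 : f = u1 * g1. Proof. by rewrite divpK. Qed.
Let f_u3 : f = u3 * g3. Proof. by rewrite divpK. Qed.

Lemma self_dual_dvdp_first x y : f %| g1 * x + g2 * y -> f %| g3 * y -> g1 %| x.
Proof.
move=> xy y3; have [a [b [ex _]]] := self_dual_dual_mem f0 sdC xy y3.
by rewrite (dvdp_mod _ g1_f) ex -(dvdp_mod _ g1_f) dvdp_mulIr.
Qed.

Lemma self_dual_dvdp_second y : f %| g2 * y -> f %| g3 * y -> g3 %| y.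
Proof.
move=> y2 y3; have y2' : f %| g1 * 0 + g2 * y by rewrite mulr0 add0r.
have [a [b [ea eb]]] := self_dual_dual_mem f0 sdC y2' y3.
have /dvdpP [k ek] : u1 %| a.
  have : f %| a * g1 by rewrite (dvdp_mod _ (dvdpp f)) -ea mod0p dvdp0.
  by rewrite f_u1 dvdp_mul2r.
rewrite (dvdp_mod _ g3_f) eb -(dvdp_mod _ g3_f) dvdp_addl ?dvdp_mulIr //.
by rewrite ek -mulrA dvdp_mull.
Qed.

Let g1_u1 : g1 %| u1.
Proof. by apply: (self_dual_dvdp_first (y := 0)); rewrite ?mulr0 ?addr0 // mulrC -f_u1. Qed.

Let f' := u1 %/ g1.
Let f_f' : f = g1 ^+ 2 * f'. Proof. by rewrite f_u1 -(divpK g1_u1); ring. Qed.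
Let f'0 : f' != 0. Proof. by apply: contraNneq f0 => f'0; rewrite f_f' f'0 mulr0. Qed.

Let u3_g3 : u3 %| g3.
Proof. by have [_ _] := self_dual_orth sdC; rewrite f_u3 expr2 dvdp_mul2r. Qed.
Let u3_g2 : u3 %| g2.
Proof. by have [_ + _] := self_dual_orth sdC; rewrite f_u3 dvdp_mul2r. Qed.

Let t := g3 %/ u3.
Let w := g2 %/ u3.
Let g3E : g3 = t * u3. Proof. by rewrite divpK. Qed.
Let g2E : g2 = w * u3. Proof. by rewrite divpK. Qed.

Let z := u1 * g2 %/ g3.
Let z_g1 : z * g1 = u3 * g2.
Proof.
apply: (mulIf g30); rewrite -mulrA [g1 * g3]mulrC mulrA divpK //.
by rewrite -mulrA [g2 * g1]mulrC mulrA -f_u1 f_u3; ring.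
Qed.

Let g1_z : g1 %| z.
Proof.
apply: (self_dual_dvdp_first (y := u3)); last by rewrite mulrC -f_u3.
by rewrite mulrC z_g1 mulrC -mulr2n (mulrn_pchar char2) dvdp0.
Qed.

Let a0 := z %/ g1.
Let a0E : a0 * g1 ^+ 2 = w * u3 ^+ 2.
Proof. by rewrite expr2 mulrA divpK // z_g1 g2E; ring. Qed.

Let g2_sqr : g2 ^+ 2 = w * a0 * g1 ^+ 2.
Proof. by rewrite -mulrA a0E g2E; ring. Qed.

Let f'_wa0 : f' %| w * a0 + 1.
Proof.
have [+ _ _] := self_dual_orth sdC.
by rewrite f_f' g2_sqr (_ : _ + _ = g1 ^+ 2 * (w * a0 + 1)) ?dvdp_mul2l ?expf_neq0 //; ring.
Qed.

Let coprime_f'_a0 : coprimep f' a0.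
Proof. by rewrite coprimep_sym (coprimep_dvdl f'_wa0) // coprimep_addl_mul coprimep1. Qed.

Let g2_g3 : g2 * g3 = t * a0 * g1 ^+ 2.
Proof. by rewrite -mulrA a0E g2E g3E; ring. Qed.

Let f'_t : f' %| t.
Proof.
have [_ + _] := self_dual_orth sdC.
by rewrite f_f' g2_g3 [_ * g1 ^+ 2]mulrC dvdp_mul2l ?expf_neq0 // Gauss_dvdpl.
Qed.

Let g3_f'u3 : g3 %| f' * u3.
Proof.
apply: self_dual_dvdp_second; last by rewrite mulrCA [g3 * u3]mulrC -f_u3 dvdp_mulIr.
have -> : g2 * (f' * u3) = f' * (w * u3 ^+ 2) by rewrite g2E; ring.
by rewrite -a0E (_ : _ * (a0 * _) = a0 * f) ?dvdp_mulIr // f_f'; ring.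
Qed.

Let u3_monic : u3 \is monic. Proof. by move: monic_f; rewrite f_u3 monicMr. Qed.
Let f'_monic : f' \is monic.
Proof. by move: monic_f; rewrite f_f' monicMl // monic_exp. Qed.

Let t_f' : t = f'.
Proof.
have t_monic : t \is monic by move: monic_g3; rewrite g3E monicMr.
apply/eqP; rewrite -eqp_monic // /eqp f'_t andbT.
by rewrite -(dvdp_mul2r _ _ (monic_neq0 u3_monic)) -g3E.
Qed.

Let u3_g1 : u3 = g1.
Proof.
have sq : u3 ^+ 2 = g1 ^+ 2.
  by apply: (mulIf f'0); rewrite -f_f' f_u3 g3E t_f'; ring.
apply/eqP; rewrite -eqp_monic // /eqp -(dvdp_pexp2r _ _ (ltn0Sn 1)) sq dvdpp.
by rewrite -(dvdp_pexp2r _ _ (ltn0Sn 1)) sq dvdpp.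
Qed.

Lemma self_dual_code_of_rows_form : exists f' w : {poly F},
  [/\ f = g1 ^+ 2 * f', g3 = g1 * f', g2 = g1 * w & f' %| (1 + w) ^+ 2].
Proof.
exists f', w; split => //; first by rewrite g3E t_f' u3_g1 mulrC.
  by rewrite g2E u3_g1 mulrC.
have [+ _ _] := self_dual_orth sdC.
rewrite f_f' g2E u3_g1 sqrrD1_pchar2 //.
by rewrite (_ : _ + _ = g1 ^+ 2 * (1 + w ^+ 2)) ?dvdp_mul2l ?expf_neq0 //; ring.
Qed.

End SelfDualForm.

Lemma self_dual_code_of_rowsP (F : fieldType) (f g1 g2 g3 : {poly F}) :
  2%N \in [pchar F] -> f \is monic -> g1 \is monic -> g1 %| f ->
  g3 \is monic -> g3 %| f -> g3 %| (f %/ g1) * g2 ->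
  self_dual f (code_of_rows f g1 g2 g3) <->
  exists f' w : {poly F},
    [/\ f = g1 ^+ 2 * f', g3 = g1 * f', g2 = g1 * w & f' %| (1 + w) ^+ 2].
Proof.
move=> pchar2 mf mg1 g1_f mg3 g3_f g3_g2; split; first exact: self_dual_code_of_rows_form.
by case=> f' [w [ef e3 e2 f'_w]]; apply: (code_of_rows_self_dual pchar2 (monic_neq0 mf) ef e3 e2).
Qed.

Lemma ltn_size_mul2l (F : fieldType) (g u v : {poly F}) : g != 0 -> v != 0 ->
  (size (g * u)%R < size (g * v)%R)%N = (size u < size v)%N.
Proof.
move=> g0 v0; have [->|u0] := eqVneq u 0.
  by rewrite mulr0 size_poly0 !size_poly_gt0 mulf_neq0.
rewrite !size_mul //.
have := size_poly_gt0 g; have := size_poly_gt0 u; rewrite g0 u0.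
by move: (size g) (size u) (size v) => a b c; lia.
Qed.

Lemma dvdp_sqr_add1P (F : fieldType) (f' w : {poly F}) :
  2%N \in [pchar F] -> f' \is monic -> (size w < size f')%N ->
  f' %| (1 + w) ^+ 2 <->
  (f' = 1 /\ w = 0) \/
  (exists h, w = h * sqrt2 f' + 1 /\ (size h <= (size f').-1 - (size (sqrt2 f')).-1)%N).
Proof.
move=> pchar2 mf' sw; have char2 := pchar2_poly pchar2; have f'0 := monic_neq0 mf'.
split=> [f'_w | [[-> ->] | [h [-> _]]]]; last 2 first.
- by rewrite dvd1p.
- rewrite addrCA (addrr_pchar2 char2) addr0 exprMn.
  exact: dvdp_mull (dvdp_sqr_sqrt2 f'0).
have [f'1 | f'n1] := eqVneq f' 1.
  by left; split=> //; apply/eqP; move: sw; rewrite f'1 size_poly1 ltnS leqn0 size_poly_eq0.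
have f'_gt1 : (1 < size f')%N.
  rewrite ltn_neqAle size_poly_gt0 f'0 andbT eq_sym.
  apply: contra f'n1 => /size_poly1P [c _ ec].
  by move: mf'; rewrite ec monicE lead_coefC => /eqP ->.
have [ms _] := sqrt2P f'0; have s0 := monic_neq0 ms.
right; have /dvdpP [h eh] := sqrt2_dvdp f'0 f'_w; exists h; split.
  by rewrite -eh addrAC (addrr_pchar2 char2) add0r.
have [-> | h0] := eqVneq h 0; first by rewrite size_poly0.
have := size_polyD 1 w; rewrite eh size_mul // size_poly1.
have := size_poly_gt0 h; have := size_poly_gt0 (sqrt2 f'); rewrite h0 s0.
by move: (size h) (size (sqrt2 f')) (size w) (size f') sw f'_gt1 => a b c d; lia.
Qed.

Unset Implicit Arguments.

Theorem mainTheorem10 (F : finFieldType) (f g1 g2 g3 : {poly F}) :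
  2%N \in [pchar F] ->
  f \is monic ->
  g1 \is monic -> g1 %| f ->
  g3 \is monic -> g3 %| f ->
  g3 %| (f %/ g1) * g2 ->
  (size g2 <= (size g3).-1)%N ->
  self_dual f (code_of_rows f g1 g2 g3) <->
  ((g1 = g3 /\ g2 = 0 /\ f = g1 ^+ 2) \/
   (exists f' h : {poly F},
      [/\ f = g1 ^+ 2 * f', g3 = g1 * f',
          g2 = g1 * (h * sqrt2 f' + 1) &
          (size h <= (size f').-1 - (size (sqrt2 f')).-1)%N])).
Proof.
move=> pchar2 mf mg1 g1_f mg3 g3_f g3_g2 sz.
have [g10 g30] := (monic_neq0 mg1, monic_neq0 mg3).
rewrite -ltnS prednK ?size_poly_gt0 // in sz.
have formP f' w : f = g1 ^+ 2 * f' -> g3 = g1 * f' -> g2 = g1 * w ->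
    f' %| (1 + w) ^+ 2 <-> (f' = 1 /\ w = 0) \/ (exists h, w = h * sqrt2 f' + 1 /\
      (size h <= (size f').-1 - (size (sqrt2 f')).-1)%N).
  move=> ef e3 e2; have f'0 : f' != 0 by apply: contraNneq g30 => f'0; rewrite e3 f'0 mulr0.
  apply: dvdp_sqr_add1P => //; first by move: mf; rewrite ef monicMl // monic_exp.
  by rewrite -(ltn_size_mul2l _ g10) // -e2 -e3.
rewrite self_dual_code_of_rowsP //.
split=> [[f' [w [ef e3 e2 /(formP _ _ ef e3 e2)]]] | ].
  case=> [[f'1 w0] | [h [ew hs]]]; [left | right; exists f', h].
    by rewrite e3 e2 ef f'1 w0 !mulr1 mulr0.
  by rewrite -ew.
case=> [[e13 [e2 ef]] | [f' [h [ef e3 e2 hs]]]].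
  by exists 1, 0; rewrite !mulr1 mulr0 dvd1p -e13.
exists f', (h * sqrt2 f' + 1); split => //.
by apply/(formP _ _ ef e3 e2); right; exists h.
Qed.
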